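(* The integer sequence $(PPL_t(n))_{n\geq 0}$ is $4$-regular.
   Context: The Thue-Morse word $t=t[1]t[2]\cdots=abbabaabbaababba\cdots$ is the fixed point starting with $a$ of the morphism $a\mapsto abba,\ b\mapsto baab$. A palindrome is a word $p=p[1]\cdots p[n]$ with $p[i]=p[n-i+1]$ for all $i$. $PPL_t(n)$ is the minimal number of nonempty palindromes whose concatenation equals the prefix of $t$ of length $n$, with $PPL_t(0)=0$. An integer sequence $(a(n))_{n\geq0}$ is called $k$-regular if there exist finitely many integer sequences $(a_1(n)),\ldots,(a_s(n))$ such that for every integer $i\geq 0$ and every $0\leq b<k^i$ there exist $c_1,\ldots,c_s\in\mathbb Z$ with $a(k^i n+b)=\sum_{j=1}^s c_j a_j(n)$ for all $n\geq 0$. *)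

From mathcomp Require Import all_boot all_order all_algebra.
From Stdlib Require Import ClassicalEpsilon.
Set Implicit Arguments. Unset Strict Implicit. Unset Printing Implicit Defensive.
Import GRing.Theory.

(* Letters: a = false, b = true. *)
Definition tm_morph (w : seq bool) : seq bool :=
  flatten [seq (if x then [:: true; false; false; true]
                else [:: false; true; true; false]) | x <- w].

(* mu^n(a); its length is 4^n, and mu^n(a) is a prefix of mu^(n+1)(a). *)
Definition tm_iter (n : nat) : seq bool := iter n tm_morph [:: false].

(* The prefix of length n of the Thue-Morse word t (fixed point of mu
   starting with a); since |mu^n(a)| = 4^n >= n, this is take n (mu^n(a)). *)
Definition tm_prefix (n : nat) : seq bool := take n (tm_iter n).

Definition palindrome (p : seq bool) : Prop := p = rev p.

Definition pal_fact (w : seq bool) (k : nat) : Prop :=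
  exists ps : seq (seq bool),
    size ps = k /\ (forall p, p \in ps -> p <> [::] /\ palindrome p)
    /\ flatten ps = w.

Definition pal_factb (w : seq bool) (k : nat) : bool :=
  if excluded_middle_informative (pal_fact w k) then true else false.

Lemma pal_fact_exists (w : seq bool) : exists k, pal_factb w k.
Proof.
exists (size w); rewrite /pal_factb.
case: excluded_middle_informative => // H; exfalso; apply: H.
exists [seq [:: x] | x <- w]; split; first by rewrite size_map.
split; last by elim: w => //= x w ->.
by move=> p /mapP [x _ ->].
Qed.

Definition PPL (w : seq bool) : nat := ex_minn (pal_fact_exists w).

Definition PPL_t (n : nat) : nat := PPL (tm_prefix n).

Definition k_regular (k : nat) (a : nat -> int) : Prop :=
  exists (s : nat) (as_ : 'I_s -> nat -> int),
    forall (i b : nat), (b < k ^ i)%N ->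
      exists c : 'I_s -> int,
        forall n : nat, a (k ^ i * n + b)%N = (\sum_(j < s) c j * as_ j n)%R.

From mathcomp Require Import all_boot all_order all_algebra.
From mathcomp Require Import zify.
From Stdlib Require Import ClassicalEpsilon.

Set Implicit Arguments.
Unset Strict Implicit.
Unset Printing Implicit Defensive.

Import GRing.Theory.

(* Write p = PPL_t and mu for the Thue-Morse morphism. The last factor of a
   shortest palindromic factorisation of t[0..m) is a palindrome t[j..m), so
   p m = min { p j + 1 | j < m, t[j..m) palindrome }. Besides single letters,
   a palindromic factor t[j..m) of t either has length 3 and j = 2, 3 mod 4,
   or satisfies j + m = 0 mod 4 and then sits symmetrically inside the image
   under mu of the palindrome t[j/4 .. ceil(m/4)); conversely mu maps
   palindromes to palindromes. This yields p(4n) = p(n), p(4n+1) = p(n)+1,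
   p(4n+2) = min(p(n), p(n+1))+2 and p(4n+3) = p(n+1)+1. As |p(n+1) - p(n)| <= 1,
   min(p(n), p(n+1)) = p(n) - [p(n+1) < p(n)], so the Z-span of p(n), p(n+1),
   1, [p(n+1) < p(n)] and [p(n) < p(n+1)] is stable under n |-> 4n + b. *)

Section LinearRepresentation.
Variables (k s : nat) (f : 'I_s -> nat -> int) (A : nat -> 'I_s -> 'I_s -> int).
Hypothesis f_kernel_closed :
  forall b i n, b < k -> f i (k * n + b) = (\sum_l A b i l * f l n)%R.

Lemma kernel_span e b i : b < k ^ e ->
  exists c : 'I_s -> int, forall n, f i (k ^ e * n + b) = (\sum_l c l * f l n)%R.
Proof.
elim: e b i => [|e IHe] b i hb.
  exists (fun l => (i == l)%:R%R) => n; move: hb; rewrite expn0 mul1n ltnS leqn0 => /eqP ->.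
  rewrite addn0 (bigD1 i) //= eqxx mul1r big1 ?addr0 // => l /negbTE.
  by rewrite eq_sym => ->; rewrite mul0r.
have hke : 0 < k ^ e.
  by move: (leq_ltn_trans (leq0n b) hb); rewrite !expn_gt0 orbF => ->.
have hb0 : b %% k ^ e < k ^ e by rewrite ltn_mod.
have [c hc] := IHe (b %% k ^ e) i hb0.
exists (fun l' => \sum_l c l * A (b %/ k ^ e) l l')%R => n.
have hb1 : b %/ k ^ e < k by rewrite ltn_divLR // -expnS.
have -> : k ^ e.+1 * n + b = k ^ e * (k * n + b %/ k ^ e) + b %% k ^ e.
  by rewrite mulnDr mulnA -expnSr -addnA [k ^ e * _]mulnC -divn_eq.
rewrite hc; under eq_bigr => l _ do rewrite f_kernel_closed // mulr_sumr.
rewrite exchange_big /=; apply: eq_bigr => l' _; rewrite mulr_suml.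
by apply: eq_bigr => l _; rewrite mulrA.
Qed.

Lemma k_regular_of_kernel_closed (j : 'I_s) : k_regular k (f j).
Proof. by exists s, f => e b hb; apply: kernel_span. Qed.

End LinearRepresentation.

Lemma base4_ind (P : nat -> Prop) :
  (forall a r, r < 4 -> P (4 * a + r)) -> forall x, P x.
Proof. by move=> hP x; rewrite (divn_eq x 4) mulnC; apply/hP/ltn_pmod. Qed.

Definition tm_digit (r : nat) : bool := nth false (tm_iter 1) r.

Lemma tm_digit_mirror r : r < 4 -> tm_digit (3 - r) = tm_digit r.
Proof. by case: r => [|[|[|[|r]]]]. Qed.

Lemma size_tm_morph w : size (tm_morph w) = 4 * size w.
Proof. by elim: w => [|x w IHw] //=; rewrite size_cat IHw; case: x => /=; lia. Qed.

Lemma nth_tm_morph w a r : a < size w -> r < 4 ->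
  nth false (tm_morph w) (4 * a + r) = tm_digit r (+) nth false w a.
Proof.
elim: w a => [|x w IHw] // a ha hr; rewrite /tm_morph /= -/(tm_morph w) nth_cat.
case: a ha => [|a] ha.
  by rewrite muln0 add0n; clear IHw; case: {ha} x; case: r hr => [|[|[|[|r]]]].
rewrite (_ : _ < _ = false); last by case: {ha} x => /=; lia.
rewrite (_ : _ - _ = 4 * a + r); last by case: {ha} x => /=; lia.
exact: IHw.
Qed.

Lemma tm_iterS k : tm_iter k.+1 = tm_morph (tm_iter k).
Proof. by []. Qed.

Lemma size_tm_iter k : size (tm_iter k) = 4 ^ k.
Proof. by elim: k => [|k IHk] //; rewrite tm_iterS size_tm_morph IHk expnS. Qed.

Lemma nth_tm_iterS k i : i < 4 ^ k ->
  nth false (tm_iter k.+1) i = nth false (tm_iter k) i.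
Proof.
elim: k i => [|k IHk] i hi; first by case: i hi.
have hr : i %% 4 < 4 by rewrite ltn_mod.
have ha : i %/ 4 < 4 ^ k by rewrite ltn_divLR // mulnC -expnS.
rewrite (divn_eq i 4) mulnC tm_iterS [tm_iter k.+1]tm_iterS.
by rewrite !nth_tm_morph ?IHk ?size_tm_morph ?size_tm_iter //; lia.
Qed.

Lemma nth_tm_iter_le k k' i : k <= k' -> i < 4 ^ k ->
  nth false (tm_iter k') i = nth false (tm_iter k) i.
Proof.
move=> /subnK <- hi; elim: (k' - k) => [|d IHd] //.
by rewrite addSn nth_tm_iterS // (leq_trans hi) // leq_pexp2l // leq_addl.
Qed.

(* The letter of t at position i, counted from 0; |mu^i(a)| = 4^i > i. *)
Definition tm (i : nat) : bool := nth false (tm_iter i) i.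

Lemma nth_tm_iter k i : i < 4 ^ k -> nth false (tm_iter k) i = tm i.
Proof.
have hi : i < 4 ^ i by rewrite ltn_expl.
case: (leqP k i) => hki hk; rewrite /tm; first by rewrite (nth_tm_iter_le hki).
by rewrite (nth_tm_iter_le (ltnW hki)).
Qed.

Lemma tm4 a r : r < 4 -> tm (4 * a + r) = tm_digit r (+) tm a.
Proof.
move=> hr; have ha : a < 4 ^ a by rewrite ltn_expl.
rewrite -(nth_tm_iter (k := a.+1)) ?tm_iterS ?nth_tm_morph ?nth_tm_iter ?size_tm_iter //.
by rewrite expnS; lia.
Qed.

Lemma tm_shift a r : tm (4 * a + r) = tm_digit (r %% 4) (+) tm (a + r %/ 4).
Proof. by rewrite -tm4 ?ltn_mod //; congr tm; lia. Qed.

Lemma tm_shiftD a r s :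
  tm (4 * a + r + s) = tm_digit ((r + s) %% 4) (+) tm (a + (r + s) %/ 4).
Proof. by rewrite -addnA tm_shift. Qed.

Lemma tm_prefixE n : tm_prefix n = mkseq tm n.
Proof.
have hn : n <= 4 ^ n by rewrite ltnW // ltn_expl.
apply: (@eq_from_nth _ false); first by rewrite size_takel ?size_mkseq ?size_tm_iter.
move=> i; rewrite size_takel ?size_tm_iter // => hi.
by rewrite nth_take // nth_mkseq // nth_tm_iter // (leq_trans hi).
Qed.

Lemma tm_mirror4 a b r : r < 4 ->
  (tm (4 * a + r) == tm (4 * b + (3 - r))) = (tm a == tm b).
Proof.
move=> hr; rewrite !tm4 ?tm_digit_mirror //; last by lia.
by case: (tm_digit r); case: (tm a); case: (tm b).
Qed.

Definition tm_pal (j m : nat) : Prop :=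
  forall i, j <= i < m -> tm i = tm (j + m - 1 - i).

Lemma palindrome_drop_tm_prefix j m :
  j <= m -> palindrome (drop j (tm_prefix m)) <-> tm_pal j m.
Proof.
rewrite tm_prefixE /palindrome /mkseq -map_drop drop_iota add0n => hjm.
have nthE i : i < m - j -> nth false (map tm (iota j (m - j))) i = tm (j + i).
  by move=> hi; rewrite (nth_map 0) ?size_iota ?nth_iota.
have nth_revE i : i < m - j ->
    nth false (rev (map tm (iota j (m - j)))) i = tm (j + m - 1 - (j + i)).
  by move=> hi; rewrite nth_rev size_map size_iota // nthE; [congr tm | ]; lia.
split=> [hpal i /andP[hji him] | hpal].
  have := congr1 (nth false ^~ (i - j)) hpal.
  by rewrite nthE ?nth_revE ?subnKC //; lia.
apply: (@eq_from_nth _ false); first by rewrite size_rev.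
by move=> i; rewrite size_map size_iota => hi; rewrite nthE ?nth_revE //; apply: hpal; lia.
Qed.

Lemma tm_pal_shrink j m j' m' :
  tm_pal j m -> j <= j' -> j' + m' = j + m -> tm_pal j' m'.
Proof. by move=> hpal hj hm i hi; rewrite hm hpal //; lia. Qed.

Lemma tm_pal_mul4 j m : tm_pal j m -> tm_pal (4 * j) (4 * m).
Proof.
move=> hpal i hi; have hr : i %% 4 < 4 by rewrite ltn_mod.
have ha : j <= i %/ 4 < m by lia.
move: (hpal _ ha) => /eqP; rewrite -(tm_mirror4 _ _ hr) => /eqP.
have -> : 4 * (i %/ 4) + i %% 4 = i by lia.
by have -> : 4 * (j + m - 1 - i %/ 4) + (3 - i %% 4) = 4 * j + 4 * m - 1 - i by lia.
Qed.

(* Here j + m = 4 (j/4 + ceil(m/4)), so mirror positions of t[j..m) lie in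
   mirror blocks of mu(t[j/4 .. ceil(m/4))). *)
Lemma tm_pal_div4 j m :
  j < m -> 4 %| j + m -> tm_pal j m -> tm_pal (j %/ 4) ((m + 3) %/ 4).
Proof.
move=> hjm /dvdnP[q hq] hpal i hi.
have := divn_eq j 4; have := ltn_pmod j (isT : 0 < 4).
have := divn_eq (m + 3) 4; have := ltn_pmod (m + 3) (isT : 0 < 4).
move: hi; set a := j %/ 4; set b := (m + 3) %/ 4.
move: (j %% 4) ((m + 3) %% 4) => r s hi hs hmb hr hja; clearbody a b.
pose c := if 4 * i < j then j else 4 * i.
have hc : j <= c < m by rewrite /c; case: ltnP; lia.
have hci : 4 * i <= c < 4 * i + 4 by rewrite /c; case: ltnP; lia.
move: (hpal _ hc) => /eqP.
have -> : c = 4 * i + (c - 4 * i) by lia.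
have -> : j + m - 1 - (4 * i + (c - 4 * i)) =
          4 * (a + b - 1 - i) + (3 - (c - 4 * i)) by lia.
by rewrite tm_mirror4 ?subnKC //; [move=> /eqP | lia].
Qed.

Lemma tm_pal2_odd x : tm_pal x (x + 2) -> odd x.
Proof.
move=> hpal; have /hpal : x <= x < x + 2 by lia.
rewrite (_ : x + (x + 2) - 1 - x = x + 1); last by lia.
elim/base4_ind: x {hpal} => a [|[|[|[|r]]]] // _.
all: rewrite !tm_shiftD !tm_shift /divn /= oddD oddM /=.
all: by case: (tm (a + 0)).
Qed.

Lemma tm_pal3_mod4 x : tm_pal x (x + 3) -> 2 <= x %% 4.
Proof.
move=> hpal; have /hpal : x <= x < x + 3 by lia.
rewrite (_ : x + (x + 3) - 1 - x = x + 2); last by lia.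
elim/base4_ind: x {hpal} => a r hr; rewrite -modnDml modnMr add0n.
case: r hr => [|[|[|[|r]]]] // _; rewrite !tm_shiftD !tm_shift /divn /=.
all: by case: (tm (a + 0)).
Qed.

Lemma tm_no_pal5 x : ~ tm_pal x (x + 5).
Proof.
move=> hpal; have /hpal : x <= x < x + 5 by lia.
have /hpal : x <= x + 1 < x + 5 by lia.
rewrite (_ : x + (x + 5) - 1 - x = x + 4); last by lia.
rewrite (_ : x + (x + 5) - 1 - (x + 1) = x + 3); last by lia.
elim/base4_ind: x {hpal} => a [|[|[|[|r]]]] // _.
all: rewrite !tm_shiftD !tm_shift /divn /=.
all: by case: (tm (a + 0)); case: (tm (a + 1)).
Qed.

Lemma tm_pal_cases j m : j < m -> tm_pal j m ->
  [\/ m = j.+1, m = j + 3 /\ 2 <= j %% 4 | 4 %| j + m].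
Proof.
move=> hjm hpal; have := modn2 (j + m); case: (boolP (odd (j + m))) => _ hpar.
  have [->|[hm|hm]] : m = j.+1 \/ m = j + 3 \/ j + 5 <= m by lia.
  - by constructor 1.
  - by constructor 2; split=> //; apply: tm_pal3_mod4; rewrite -hm.
  exfalso; apply: (@tm_no_pal5 ((j + m) %/ 2 - 2)).
  by apply: tm_pal_shrink hpal _ _; lia.
have := modn2 ((j + m) %/ 2 - 1).
rewrite tm_pal2_odd => [hx|]; first by constructor 3; lia.
by apply: tm_pal_shrink hpal _ _; lia.
Qed.

Lemma pal_factP w k : reflect (pal_fact w k) (pal_factb w k).
Proof. by rewrite /pal_factb; case: excluded_middle_informative => h; constructor. Qed.

Lemma PPL_spec w : pal_fact w (PPL w).
Proof. by rewrite /PPL; case: ex_minnP => k /pal_factP. Qed.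

Lemma PPL_min w k : pal_fact w k -> PPL w <= k.
Proof. by rewrite /PPL; case: ex_minnP => k' _ hmin /pal_factP /hmin. Qed.

Lemma PPL_nil : PPL [::] = 0.
Proof. by apply/eqP; rewrite -leqn0 PPL_min //; exists [::]. Qed.

Lemma PPL_cat_pal w q : q != [::] -> palindrome q -> PPL (w ++ q) <= (PPL w).+1.
Proof.
move=> /eqP hq hpal; have [ps [hsize [hps hflat]]] := PPL_spec w.
apply: PPL_min; exists (rcons ps q); rewrite size_rcons hsize flatten_rcons hflat.
split=> //; split=> // p; rewrite mem_rcons inE => /orP[/eqP -> //|]; exact: hps.
Qed.

Lemma PPL_last_pal w : w != [::] ->
  exists u q, [/\ w = u ++ q, q != [::], palindrome q & (PPL u).+1 <= PPL w].
Proof.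
move=> hw; have [ps [hsize [hps hflat]]] := PPL_spec w.
case/lastP: ps hsize hps hflat => [|ps q] hsize hps.
  by move=> hnil; rewrite -hnil in hw.
rewrite flatten_rcons => hflat.
have [hq hpal] : q <> [::] /\ palindrome q by apply: hps; rewrite mem_rcons mem_head.
exists (flatten ps), q; split=> //; first exact/eqP.
rewrite -hsize size_rcons ltnS; apply: PPL_min; exists ps; split=> //; split=> // p hp.
by apply: hps; rewrite mem_rcons inE hp orbT.
Qed.

Lemma size_tm_prefix m : size (tm_prefix m) = m.
Proof. by rewrite tm_prefixE size_mkseq. Qed.

Lemma take_tm_prefix j m : j <= m -> take j (tm_prefix m) = tm_prefix j.
Proof. by move=> hjm; rewrite !tm_prefixE /mkseq -map_take take_iota (minn_idPl hjm). Qed.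

Lemma PPL_t0 : PPL_t 0 = 0.
Proof. by rewrite /PPL_t tm_prefixE PPL_nil. Qed.

Lemma PPL_t_pal j m : j < m -> tm_pal j m -> PPL_t m <= (PPL_t j).+1.
Proof.
move=> hjm hpal; have hjm' := ltnW hjm.
rewrite /PPL_t -(cat_take_drop j (tm_prefix m)) take_tm_prefix //.
apply: PPL_cat_pal; last exact/palindrome_drop_tm_prefix.
by rewrite -size_eq0 size_drop size_tm_prefix subn_eq0 -ltnNge.
Qed.

Lemma PPL_t_last_pal m : 0 < m ->
  exists j, [/\ j < m, tm_pal j m & PPL_t m = (PPL_t j).+1].
Proof.
move=> hm; have [|u [q [hw hq hpal hle]]] := @PPL_last_pal (tm_prefix m).
  by rewrite -size_eq0 size_tm_prefix -lt0n.
have hj : size u < m.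
  by move: (congr1 size hw) hq; rewrite size_cat size_tm_prefix -size_eq0; lia.
have hu : tm_prefix (size u) = u by rewrite -(take_tm_prefix (ltnW hj)) hw take_size_cat.
have hpal_um : tm_pal (size u) m.
  by apply/palindrome_drop_tm_prefix; rewrite ?hw ?drop_size_cat // ltnW.
exists (size u); split=> //; apply/eqP; rewrite eqn_leq PPL_t_pal //=.
by rewrite /PPL_t hu.
Qed.

Lemma PPL_tS n : PPL_t n.+1 <= (PPL_t n).+1.
Proof. by apply: PPL_t_pal => // i hi; congr tm; lia. Qed.

Lemma PPL_t_pal_inner j m : j.+1 < m -> tm_pal j m -> PPL_t m.-1 <= (PPL_t j.+1).+1.
Proof.
move=> hjm hpal; have [<-|hlt] := eqVneq j.+2 m; first exact: leqnSn.
by apply: PPL_t_pal; [lia | apply: tm_pal_shrink hpal _ _; lia].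
Qed.

Lemma PPL_t_leS n : PPL_t n <= (PPL_t n.+1).+1.
Proof.
have [j [hj hpal ->]] := PPL_t_last_pal (ltn0Sn n).
have [->|hjn] := eqVneq j n; first by rewrite -addn2 leq_addr.
by apply: leq_trans (PPL_t_pal_inner _ hpal) _; [lia | rewrite ltnS PPL_tS].
Qed.

Lemma PPL_t_mul4_le n : PPL_t (4 * n) <= PPL_t n.
Proof.
elim/ltn_ind: n => -[|n] IHn; first by rewrite muln0.
have [j [hj hpal ->]] := PPL_t_last_pal (ltn0Sn n).
apply: leq_trans (PPL_t_pal _ (tm_pal_mul4 hpal)) _; first by rewrite ltn_pmul2l.
by rewrite ltnS IHn.
Qed.

Definition ppl_rec (r x y : nat) : nat :=
  match r with 0 => x | 1 => x.+1 | 2 => (minn x y).+2 | _ => y.+1 end.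

Definition ppl_rhs (m : nat) : nat :=
  ppl_rec (m %% 4) (PPL_t (m %/ 4)) (PPL_t (m %/ 4).+1).

Lemma ppl_rhs_shift a r : ppl_rhs (4 * a + r) =
  ppl_rec (r %% 4) (PPL_t (a + r %/ 4)) (PPL_t (a + r %/ 4).+1).
Proof. by rewrite /ppl_rhs -modnDml modnMr mulnC divnMDl. Qed.

Lemma PPL_t_le_rhs m : PPL_t m <= ppl_rhs m.
Proof.
elim/base4_ind: m => a r hr; rewrite ppl_rhs_shift (modn_small hr) (divn_small hr) addn0.
have h0 : PPL_t (4 * a + 0) <= PPL_t a by rewrite addn0 PPL_t_mul4_le.
have h4 : PPL_t (4 * a + 4) <= PPL_t a.+1 by rewrite -mulnSr PPL_t_mul4_le.
have succ k : PPL_t (4 * a + k.+1) <= (PPL_t (4 * a + k)).+1 by rewrite addnS PPL_tS.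
have pred k : PPL_t (4 * a + k) <= (PPL_t (4 * a + k.+1)).+1 by rewrite addnS PPL_t_leS.
move: (succ 0) (succ 1) (pred 2) (pred 3) => {succ pred}.
by case: r hr => [|[|[|[|r]]]] //= _; lia.
Qed.

Lemma ppl_rhs_succ j : ppl_rhs j.+1 <= (ppl_rhs j).+1.
Proof.
elim/base4_ind: j => a r hr; rewrite -addnS !ppl_rhs_shift.
have := PPL_tS a.
by case: r hr => [|[|[|[|r]]]] // _; rewrite /divn /= ?addn0 ?addn1; lia.
Qed.

Lemma ppl_rhs_add3 j : 2 <= j %% 4 -> ppl_rhs (j + 3) <= (ppl_rhs j).+1.
Proof.
elim/base4_ind: j => a r hr; rewrite -modnDml modnMr add0n (modn_small hr) -addnA.
move=> hr2; rewrite !ppl_rhs_shift; have := PPL_tS a.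
by case: r hr hr2 => [|[|[|[|r]]]] // _ _; rewrite /divn /= ?addn0 ?addn1; lia.
Qed.

Lemma ppl_rhs_div4 j m :
  j < m -> 4 %| j + m -> tm_pal j m -> ppl_rhs m <= (ppl_rhs j).+1.
Proof.
move=> hjm hdvd /(tm_pal_div4 hjm hdvd); move: hjm hdvd.
elim/base4_ind: j => a r hr; elim/base4_ind: m => b s hs hjm hdvd.
rewrite !ppl_rhs_shift (modn_small hr) (modn_small hs) (divn_small hr) (divn_small hs) !addn0.
have -> : (4 * a + r) %/ 4 = a by rewrite mulnC divnMDl // (divn_small hr) addn0.
have -> : (4 * b + s + 3) %/ 4 = b + (s + 3) %/ 4 by rewrite -addnA mulnC divnMDl.
case: r hr hjm hdvd => [|[|[|[|r]]]] // _; case: s hs => [|[|[|[|s]]]] // _ hjm hdvd.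
all: rewrite /divn /= ?addn0 ?addn1 => hpal; try by exfalso; lia.
- by apply: (PPL_t_pal _ hpal); lia.
- by apply: (PPL_t_pal _ hpal); lia.
- have h1 : PPL_t b.+1 <= (PPL_t a).+1 by apply: (PPL_t_pal _ hpal); lia.
  have h2 : PPL_t b <= (PPL_t a.+1).+1 by apply: (PPL_t_pal_inner _ hpal); lia.
  lia.
- by apply: (PPL_t_pal_inner _ hpal); lia.
Qed.

Lemma ppl_rhs_pal j m : j < m -> tm_pal j m -> ppl_rhs m <= (ppl_rhs j).+1.
Proof.
move=> hjm hpal; case: (tm_pal_cases hjm hpal) => [-> | [-> h2] | hdvd].
- exact: ppl_rhs_succ.
- exact: ppl_rhs_add3.
- exact: ppl_rhs_div4.
Qed.

Lemma ppl_rhs_le m : ppl_rhs m <= PPL_t m.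
Proof.
elim/ltn_ind: m => -[|m] IHm; first by rewrite /ppl_rhs mod0n div0n.
have [j [hj hpal ->]] := PPL_t_last_pal (ltn0Sn m).
by apply: leq_trans (ppl_rhs_pal hj hpal) _; rewrite ltnS IHm.
Qed.

Lemma PPL_t_rec n r : r < 4 -> PPL_t (4 * n + r) = ppl_rec r (PPL_t n) (PPL_t n.+1).
Proof.
move=> hr; have -> : ppl_rec r (PPL_t n) (PPL_t n.+1) = ppl_rhs (4 * n + r).
  by rewrite ppl_rhs_shift (modn_small hr) (divn_small hr) addn0.
by apply/eqP; rewrite eqn_leq PPL_t_le_rhs ppl_rhs_le.
Qed.

Definition ppl_family (i : 'I_5) (n : nat) : int :=
  match val i with
  | 0 => PPL_t n
  | 1 => PPL_t n.+1
  | 2 => 1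
  | 3 => (PPL_t n.+1 < PPL_t n)%N
  | _ => (PPL_t n < PPL_t n.+1)%N
  end.

Definition ppl_table : seq (seq (seq int)) := [::
  [:: [:: 1; 0; 0; 0; 0]; [:: 1; 0; 1;  0; 0]; [:: 0; 0; 1; 0; 0];
      [:: 0; 0; 0; 0;  0]; [:: 0; 0; 1;  0; 0]];
  [:: [:: 1; 0; 1; 0; 0]; [:: 1; 0; 2; -1; 0]; [:: 0; 0; 1; 0; 0];
      [:: 0; 0; 0; 0;  0]; [:: 0; 0; 1; -1; 0]];
  [:: [:: 1; 0; 2; -1; 0]; [:: 0; 1; 1;  0; 0]; [:: 0; 0; 1; 0; 0];
      [:: 0; 0; 1; 0; -1]; [:: 0; 0; 0;  0; 0]];
  [:: [:: 0; 1; 1; 0; 0]; [:: 0; 1; 0;  0; 0]; [:: 0; 0; 1; 0; 0];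
      [:: 0; 0; 1; 0;  0]; [:: 0; 0; 0;  0; 0]]]%R.

Definition ppl_coef (b : nat) (i l : 'I_5) : int :=
  nth 0%R (nth [::] (nth [::] ppl_table b) i) l.

Lemma ppl_family_rec b i n : b < 4 ->
  ppl_family i (4 * n + b) = (\sum_l ppl_coef b i l * ppl_family l n)%R.
Proof.
move=> hb; rewrite !big_ord_recl big_ord0 /=.
have p0 : PPL_t (4 * n + 0) = PPL_t n by rewrite PPL_t_rec.
have p1 : PPL_t (4 * n + 1) = (PPL_t n).+1 by rewrite PPL_t_rec.
have p2 : PPL_t (4 * n + 2) = (minn (PPL_t n) (PPL_t n.+1)).+2 by rewrite PPL_t_rec.
have p3 : PPL_t (4 * n + 3) = (PPL_t n.+1).+1 by rewrite PPL_t_rec.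
have p4 : PPL_t (4 * n + 4) = PPL_t n.+1 by rewrite -mulnSr -[4 * _]addn0 PPL_t_rec.
have := PPL_tS n; have := PPL_t_leS n.
case: b hb => [|[|[|[|b]]]] // _; case: i => [[|[|[|[|[|i]]]]] hi] //.
all: rewrite /ppl_family /ppl_coef /= -?addnS ?p0 ?p1 ?p2 ?p3 ?p4; lia.
Qed.

Theorem corollary17 : k_regular 4 (fun n => Posz (PPL_t n)).
Proof. exact: (k_regular_of_kernel_closed ppl_family_rec ord0). Qed.
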